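(* Let $j\ge 2$ be an integer and let $\bar\alpha_j$ be the largest $\alpha\ge 0$ such that $\left(1-e^{-\alpha^{j-1}x^{j-1}}\right)^{j-1}\le x$ for all $x\in(0,1]$. For $\alpha>0$ and an integer $k\ge 2$ with $\delta:=\alpha(k-1)^{-j/(j-1)}\le 1$, define the sequence $x_0=\delta$ and $$x_{i+1}=\delta\left(1-\Bigl[1-(1-\delta)\bigl(1-(1-x_i)^{k-1}\bigr)^{j-1}-x_i\Bigr]^{k-1}\right)^{j-1},\quad i\ge 0.$$ (a) If $\alpha<\bar\alpha_j$, there exists $K_1<\infty$ such that for all $k\ge K_1$, $x_i\to 0$ as $i\to\infty$. (b) If $\alpha>\bar\alpha_j$, there exists $K_2<\infty$ such that for all $k\ge K_2$, $x_i$ does not converge to $0$.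
   Context: The recursion is the density evolution of the LM1 verification-decoding algorithm (Luby–Mitzenmacher) for a $(j,k)$-regular LDPC code on the $q$-ary symmetric channel with error probability $\delta$ (equivalently, LM1 reconstruction of a strictly sparse signal whose fraction of nonzero entries is $\delta$); $x_i$ is the fraction of unverified messages after $i$ iterations, and $x_i\to0$ corresponds to successful decoding/reconstruction with high probability as the block length tends to infinity. *)

From Stdlib Require Import Reals.
Open Scope R_scope.

Definition admissible (j : nat) (alpha : R) : Prop :=
  0 <= alpha /\
  forall x : R, 0 < x <= 1 ->
    (1 - exp (- (alpha ^ (j - 1) * x ^ (j - 1)))) ^ (j - 1) <= x.

Definition is_alpha_bar (j : nat) (abar : R) : Prop :=
  admissible j abar /\ forall alpha, admissible j alpha -> alpha <= abar.

Definition lm1_delta (j k : nat) (alpha : R) : R :=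
  alpha * Rpower (INR (k - 1)) (- (INR j / INR (j - 1))).

Fixpoint lm1_seq (j k : nat) (delta : R) (i : nat) : R :=
  match i with
  | O => delta
  | S i' =>
      let x := lm1_seq j k delta i' in
      delta * (1 - (1 - (1 - delta) * (1 - (1 - x) ^ (k - 1)) ^ (j - 1) - x)
                     ^ (k - 1)) ^ (j - 1)
  end.

(* Write j = n + 1 and k = m + 1, and set eps = m^(-1/n), so that
   delta = alpha eps^(n+1).  The scaled parameter e = alpha eps satisfies
   m delta = e and m e^n = alpha^n, and e -> 0 as k -> oo.  Writing the
   iterates as x_i = delta v_i, one step of the recursion becomes
   v |-> (1 - B(delta v)^m)^n, and for small e the bracket B satisfies
   B(delta v)^m ~ exp (-(alpha v)^n); the limiting map is therefore
   v |-> (1 - exp (-(alpha v)^n))^n, which is exactly what admissibility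
   compares with the identity.  Part (a) follows from a contraction v_{i+1} <= rho v_i
   with rho < 1; part (b) from the invariance of an interval [y, 1] with y > 0
   taken where some s in (bar alpha, alpha) fails to be admissible. *)

From Stdlib Require Import Reals Lra Lia Psatz Classical.
Open Scope R_scope.

Lemma pow_unit_interval (m : nat) (x : R) : 0 <= x <= 1 -> 0 <= x ^ m <= 1.
Proof.
  intros Hx; split; [apply pow_le; lra|].
  rewrite <- (pow1 m); apply pow_incr; lra.
Qed.

Lemma pow_le_base (n : nat) (y : R) : (1 <= n)%nat -> 0 <= y <= 1 -> y ^ n <= y.
Proof.
  intros Hn Hy; destruct n as [|n]; [lia|]; simpl.
  destruct (pow_unit_interval n y Hy); nra.
Qed.

Lemma pow_lt_compat (n : nat) (x y : R) : (1 <= n)%nat -> 0 <= x < y -> x ^ n < y ^ n.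
Proof.
  intros Hn Hxy; destruct n as [|n]; [lia|]; simpl.
  assert (x ^ n <= y ^ n) by (apply pow_incr; lra).
  assert (0 < y ^ n) by (apply pow_lt; lra).
  nra.
Qed.

Lemma bernoulli (m : nat) (t : R) : -1 <= t -> 1 + INR m * t <= (1 + t) ^ m.
Proof.
  intros Ht; induction m as [|m IH]; [simpl; lra|].
  rewrite S_INR; simpl.
  assert (0 <= INR m) by apply pos_INR.
  nra.
Qed.

Lemma exp_le_compat (a b : R) : a <= b -> exp a <= exp b.
Proof.
  intros Hab; destruct (Rle_lt_or_eq _ _ Hab) as [Hlt|Heq].
  - left; apply exp_increasing, Hlt.
  - rewrite Heq; right; reflexivity.
Qed.

Lemma exp_pow (m : nat) (a : R) : exp a ^ m = exp (INR m * a).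
Proof.
  rewrite <- Rpower_pow by apply exp_pos.
  unfold Rpower; rewrite ln_exp, Rmult_comm; reflexivity.
Qed.

(* Upper bound (1 - u)^m <= exp (-m u), from 1 - u <= exp (-u). *)
Lemma pow_le_exp (m : nat) (u : R) : u <= 1 -> (1 - u) ^ m <= exp (- (INR m * u)).
Proof.
  intros Hu.
  replace (- (INR m * u)) with (INR m * - u) by ring.
  rewrite <- exp_pow; apply pow_incr.
  pose proof (exp_ineq1_le (- u)); lra.
Qed.

(* Lower bound (1 - t)^m >= exp (-w) whenever m t <= w (1 - t); this is
   exp (-t / (1 - t)) <= 1 - t raised to the power m. *)
Lemma exp_le_pow (m : nat) (t w : R) :
  0 <= t < 1 -> INR m * t <= w * (1 - t) -> exp (- w) <= (1 - t) ^ m.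
Proof.
  intros Ht Hw.
  set (a := t / (1 - t)).
  assert (Ha : (1 - t) * (1 + a) = 1) by (unfold a; field; lra).
  assert (Hw' : INR m * a <= w).
  { unfold a; apply (Rmult_le_reg_r (1 - t)); [lra|].
    replace (INR m * (t / (1 - t)) * (1 - t)) with (INR m * t) by (field; lra).
    exact Hw. }
  assert (Hexp : exp (- a) <= 1 - t).
  { pose proof (exp_ineq1_le a); pose proof (exp_pos (- a)).
    assert (exp (- a) * exp a = 1)
      by (rewrite <- exp_plus; replace (- a + a) with 0 by ring; apply exp_0).
    assert (exp (- a) * (1 - t) * (1 + a) <= exp (- a) * (1 - t) * exp a)
      by (apply Rmult_le_compat_l; nra).
    nra. }
  apply Rle_trans with (exp (- a) ^ m).
  - rewrite exp_pow; apply exp_le_compat; lra.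
  - apply pow_incr; pose proof (exp_pos (- a)); lra.
Qed.

Lemma pow_add_le (n : nat) (q b : R) :
  0 <= q -> 0 <= b -> q + b <= 2 -> (q + b) ^ n <= q ^ n + INR n * b * 2 ^ n.
Proof.
  intros Hq Hb H2; induction n as [|n IH]; [simpl; lra|].
  rewrite S_INR; simpl.
  assert (q ^ n <= 2 ^ n) by (apply pow_incr; lra).
  assert (0 <= q ^ n) by (apply pow_le; lra).
  assert (0 <= INR n * b * 2 ^ n)
    by (apply Rmult_le_pos; [apply Rmult_le_pos; [apply pos_INR|]|apply pow_le]; lra).
  nra.
Qed.

Lemma one_minus_pow_bounds (m : nat) (x : R) : 0 <= x <= 1 ->
  0 <= 1 - (1 - x) ^ m <= INR m * x /\
  INR m * x <= (1 - (1 - x) ^ m) * (1 + INR m * x).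
Proof.
  intros Hx.
  pose proof (bernoulli m (- x) ltac:(lra)) as Hlow.
  pose proof (bernoulli m x ltac:(lra)) as Hup.
  replace (1 + - x) with (1 - x) in Hlow by ring.
  destruct (pow_unit_interval m (1 - x) ltac:(lra)).
  assert ((1 - x) ^ m * (1 + x) ^ m <= 1)
    by (rewrite <- Rpow_mult_distr; apply pow_unit_interval; nra).
  assert (0 <= INR m) by apply pos_INR.
  repeat split; nra.
Qed.

Lemma one_minus_pow_lower (m : nat) (x r : R) :
  0 <= x <= 1 -> INR m * x <= r <= 1 -> INR m * x * (1 - r) <= 1 - (1 - x) ^ m.
Proof.
  intros Hx Hr.
  destruct (one_minus_pow_bounds m x Hx) as [[HP0 _] HP].
  set (P := 1 - (1 - x) ^ m) in *.
  assert (0 <= INR m * x) by (apply Rmult_le_pos; [apply pos_INR|lra]).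
  assert (INR m * x <= P * (1 + r))
    by (assert (P * (INR m * x) <= P * r) by (apply Rmult_le_compat_l; lra); nra).
  assert (INR m * x * (1 - r) <= P * (1 + r) * (1 - r)) by (apply Rmult_le_compat_r; lra).
  assert (0 <= P * (r * r)) by (apply Rmult_le_pos; nra).
  nra.
Qed.

(* With j = n + 1 and k = m + 1, one LM1 iteration is x |-> d (1 - B(x)^m)^n,
   where B is the bracket below.  Writing x = d v, the normalized map v |->
   (1 - B(d v)^m)^n governs the ratio x_i / delta. *)
Definition lm1_bracket (n m : nat) (d x : R) : R :=
  1 - (1 - d) * (1 - (1 - x) ^ m) ^ n - x.

Definition lm1_map (n m : nat) (d v : R) : R :=
  (1 - lm1_bracket n m d (d * v) ^ m) ^ n.

Lemma lm1_seq_succ (n m : nat) (d v : R) (i : nat) :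
  lm1_seq (S n) (S m) d i = d * v ->
  lm1_seq (S n) (S m) d (S i) = d * lm1_map n m d v.
Proof.
  intros Hi; simpl lm1_seq; rewrite Hi, !Nat.sub_0_r; reflexivity.
Qed.

Lemma lm1_seq_invariant (n m : nat) (d : R) (Q : nat -> R -> Prop) :
  Q O 1 -> (forall i v, Q i v -> Q (S i) (lm1_map n m d v)) ->
  forall i, exists v, Q i v /\ lm1_seq (S n) (S m) d i = d * v.
Proof.
  intros H0 Hstep i; induction i as [|i [v [Hv Hi]]].
  - exists 1; split; [exact H0|simpl; ring].
  - exists (lm1_map n m d v); split; [apply Hstep, Hv|apply lm1_seq_succ, Hi].
Qed.

(* Estimates on one step in the scaling regime of the theorem: e = m delta
   is small and m e^n = alpha^n.  (In the theorem e = alpha (k-1)^(-1/(j-1)).) *)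
Section OneStep.

Variables (n m : nat) (e d al : R).
Hypothesis Hn : (1 <= n)%nat.
Hypothesis He : 0 < e <= 1 / 4.
Hypothesis Hd : 0 <= d <= e.
Hypothesis Hmd : INR m * d = e.
Hypothesis Hmal : INR m * e ^ n = al ^ n.

Lemma bracket_bounds (v : R) : 0 <= v <= 1 ->
  1 - 2 * e <= 1 - ((e * v) ^ n + d * v) <= lm1_bracket n m d (d * v) /\
  lm1_bracket n m d (d * v) <= 1 - (1 - d) * (1 - (1 - d * v) ^ m) ^ n.
Proof.
  intros Hv; unfold lm1_bracket.
  assert (Hmx : INR m * (d * v) = e * v) by (rewrite <- Hmd; ring).
  destruct (one_minus_pow_bounds m (d * v) ltac:(nra)) as [[HP0 HP1] _].
  rewrite Hmx in HP1.
  assert ((1 - (1 - d * v) ^ m) ^ n <= (e * v) ^ n) by (apply pow_incr; lra).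
  assert (0 <= (1 - (1 - d * v) ^ m) ^ n) by (apply pow_le; lra).
  assert ((e * v) ^ n <= e * v) by (apply pow_le_base; [exact Hn|nra]).
  repeat split; nra.
Qed.

Lemma bracket_unit_interval (v : R) : 0 <= v <= 1 ->
  0 <= lm1_bracket n m d (d * v) <= 1.
Proof.
  intros Hv; destruct (bracket_bounds v Hv) as [[H1 H2] H3].
  assert (0 <= (1 - (1 - d * v) ^ m) ^ n)
    by (apply pow_le; destruct (one_minus_pow_bounds m (d * v) ltac:(nra)); lra).
  split; nra.
Qed.

Lemma map_range (v : R) : 0 <= v <= 1 -> 0 <= lm1_map n m d v <= 1.
Proof.
  intros Hv; pose proof (bracket_unit_interval v Hv) as HB.
  destruct (pow_unit_interval m _ HB).
  apply pow_unit_interval; lra.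
Qed.

Lemma bracket_pow_lower (s v : R) :
  0 <= s -> al ^ n <= (1 - 2 * e) * s ^ n -> 0 <= v <= 1 ->
  exp (- (s * v) ^ n) - 2 * e * v <= lm1_bracket n m d (d * v) ^ m.
Proof.
  intros Hs0 Hs Hv.
  destruct (bracket_bounds v Hv) as [[H1 H2] _].
  set (t := (e * v) ^ n + d * v) in *.
  assert (Ht0 : 0 <= t) by (unfold t; assert (0 <= (e * v) ^ n) by (apply pow_le; nra); nra).
  set (W := (s * v) ^ n + 2 * e * v).
  assert (HsvW : 0 <= (s * v) ^ n) by (apply pow_le; nra).
  assert (Hw : INR m * t <= W * (1 - t)).
  { assert (Hmt : INR m * t = al ^ n * v ^ n + e * v)
      by (unfold t; rewrite Rpow_mult_distr, <- Hmal, <- Hmd; ring).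
    assert (W * (1 - 2 * e) <= W * (1 - t)) by (apply Rmult_le_compat_l; unfold W; nra).
    assert (al ^ n * v ^ n <= (1 - 2 * e) * s ^ n * v ^ n)
      by (apply Rmult_le_compat_r; [apply pow_le|]; lra).
    assert (e * v <= 2 * e * v * (1 - 2 * e))
      by (assert (0 <= e * v * (1 - 4 * e)) by (apply Rmult_le_pos; nra); nra).
    rewrite Hmt; apply Rle_trans with (W * (1 - 2 * e)); [|assumption].
    unfold W; rewrite Rpow_mult_distr; nra. }
  pose proof (exp_le_pow m t W ltac:(lra) Hw) as Hpow.
  assert ((1 - t) ^ m <= lm1_bracket n m d (d * v) ^ m) by (apply pow_incr; lra).
  assert (exp (- W) = exp (- (s * v) ^ n) * exp (- (2 * e * v)))
    by (unfold W; rewrite <- exp_plus; f_equal; ring).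
  pose proof (exp_ineq1_le (- (2 * e * v))).
  pose proof (exp_pos (- (s * v) ^ n)).
  assert (exp (- (s * v) ^ n) <= 1) by (rewrite <- exp_0; apply exp_le_compat; lra).
  assert (exp (- (s * v) ^ n) * (1 - 2 * e * v) <= exp (- (s * v) ^ n) * exp (- (2 * e * v)))
    by (apply Rmult_le_compat_l; lra).
  assert (0 <= e * v) by nra.
  nra.
Qed.

Lemma map_upper (s c v : R) :
  0 <= s -> al ^ n <= (1 - 2 * e) * s ^ n -> 0 <= v <= 1 ->
  (1 - exp (- (s * v) ^ n)) ^ n <= c * v ->
  lm1_map n m d v <= c * v + INR n * 2 ^ S n * e * v.
Proof.
  intros Hs0 Hs Hv Hc.
  pose proof (bracket_pow_lower s v Hs0 Hs Hv) as Hlow.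
  destruct (pow_unit_interval m _ (bracket_unit_interval v Hv)) as [_ HB1].
  set (q := 1 - exp (- (s * v) ^ n)) in *.
  assert (Hq : 0 <= q <= 1).
  { unfold q; pose proof (exp_pos (- (s * v) ^ n)).
    assert (0 <= (s * v) ^ n) by (apply pow_le; nra).
    assert (exp (- (s * v) ^ n) <= 1) by (rewrite <- exp_0; apply exp_le_compat; lra).
    lra. }
  unfold lm1_map.
  apply Rle_trans with ((q + 2 * e * v) ^ n); [apply pow_incr; unfold q in *; lra|].
  eapply Rle_trans; [apply pow_add_le; nra|].
  assert (0 <= INR n * 2 ^ n) by (apply Rmult_le_pos; [apply pos_INR|apply pow_le; lra]).
  simpl pow; nra.
Qed.

(* The gap 1 - B(d v) is at least (1 - delta) P^n with P = 1 - (1 - d v)^m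
   >= e v (1 - e); multiplied by m this exceeds (s v)^n as soon as
   s^n <= (1 - (n+1) e) alpha^n. *)
Lemma bracket_gap (s v : R) :
  0 <= s -> s ^ n <= (1 - INR (S n) * e) * al ^ n -> 0 <= v <= 1 ->
  (s * v) ^ n <= INR m * (1 - lm1_bracket n m d (d * v)).
Proof.
  intros Hs0 Hs Hv.
  destruct (bracket_bounds v Hv) as [_ Hgap].
  assert (Hmx : INR m * (d * v) = e * v) by (rewrite <- Hmd; ring).
  pose proof (one_minus_pow_lower m (d * v) e ltac:(nra) ltac:(rewrite Hmx; nra)) as HP.
  rewrite Hmx in HP.
  set (P := 1 - (1 - d * v) ^ m) in *.
  assert (HPn : (e * v * (1 - e)) ^ n <= P ^ n)
    by (apply pow_incr; split; [apply Rmult_le_pos; nra|exact HP]).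
  rewrite !Rpow_mult_distr in HPn.
  set (X := e ^ n * v ^ n * (1 - e) ^ n) in *.
  assert (0 <= X) by (unfold X; repeat apply Rmult_le_pos; apply pow_le; lra).
  assert (0 <= INR m) by apply pos_INR.
  assert (Hmass : (1 - e) ^ S n * al ^ n * v ^ n <= INR m * ((1 - d) * P ^ n)).
  { rewrite <- Hmal; simpl pow.
    replace ((1 - e) * (1 - e) ^ n * (INR m * e ^ n) * v ^ n) with ((1 - e) * (INR m * X))
      by (unfold X; ring).
    replace (INR m * ((1 - d) * P ^ n)) with ((1 - d) * (INR m * P ^ n)) by ring.
    apply Rle_trans with ((1 - d) * (INR m * X)).
    - apply Rmult_le_compat_r; [apply Rmult_le_pos|]; lra.
    - apply Rmult_le_compat_l; [lra|apply Rmult_le_compat_l; lra]. }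
  pose proof (bernoulli (S n) (- e) ltac:(lra)) as Hbern.
  replace (1 + - e) with (1 - e) in Hbern by ring.
  assert (0 <= v ^ n) by (apply pow_le; lra).
  assert (0 <= al ^ n) by (rewrite <- Hmal; apply Rmult_le_pos; [|apply pow_le]; lra).
  assert (s ^ n * v ^ n <= (1 - INR (S n) * e) * al ^ n * v ^ n)
    by (apply Rmult_le_compat_r; lra).
  assert ((1 - INR (S n) * e) * (al ^ n * v ^ n) <= (1 - e) ^ S n * (al ^ n * v ^ n))
    by (apply Rmult_le_compat_r; [apply Rmult_le_pos|]; lra).
  assert (INR m * ((1 - d) * P ^ n) <= INR m * (1 - lm1_bracket n m d (d * v)))
    by (apply Rmult_le_compat_l; lra).
  rewrite Rpow_mult_distr; nra.
Qed.

(* Hence B(d v)^m = (1 - gap)^m <= exp (- m gap) <= exp (-(s v)^n). *)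
Lemma bracket_pow_upper (s v : R) :
  0 <= s -> s ^ n <= (1 - INR (S n) * e) * al ^ n -> 0 <= v <= 1 ->
  lm1_bracket n m d (d * v) ^ m <= exp (- (s * v) ^ n).
Proof.
  intros Hs0 Hs Hv.
  pose proof (bracket_gap s v Hs0 Hs Hv) as Hgap.
  pose proof (bracket_unit_interval v Hv) as HB.
  set (g := 1 - lm1_bracket n m d (d * v)) in *.
  replace (lm1_bracket n m d (d * v)) with (1 - g) by (unfold g; ring).
  eapply Rle_trans; [apply pow_le_exp; unfold g; lra|].
  apply exp_le_compat; lra.
Qed.

Lemma map_lower (s y v : R) :
  0 <= s -> s ^ n <= (1 - INR (S n) * e) * al ^ n -> 0 <= y <= v -> v <= 1 ->
  (1 - exp (- (s * y) ^ n)) ^ n <= lm1_map n m d v.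
Proof.
  intros Hs0 Hs Hy Hv1.
  pose proof (bracket_pow_upper s v Hs0 Hs ltac:(lra)) as Hup.
  assert (Hsy : (s * y) ^ n <= (s * v) ^ n) by (apply pow_incr; nra).
  assert (exp (- (s * v) ^ n) <= exp (- (s * y) ^ n)) by (apply exp_le_compat; lra).
  pose proof (exp_pos (- (s * y) ^ n)).
  assert (0 <= (s * y) ^ n) by (apply pow_le; nra).
  assert (exp (- (s * y) ^ n) <= 1) by (rewrite <- exp_0; apply exp_le_compat; lra).
  unfold lm1_map; apply pow_incr; lra.
Qed.

End OneStep.

(* Admissibility of bar alpha, read at the point y = c v:
   (1 - exp (-(c bar alpha v)^n))^n <= c v for c, v in [0,1]. *)
Lemma admissible_scaled (n : nat) (abar c v : R) :
  (1 <= n)%nat -> admissible (S n) abar -> 0 <= c <= 1 -> 0 <= v <= 1 ->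
  (1 - exp (- (c * abar * v) ^ n)) ^ n <= c * v.
Proof.
  intros Hn [_ Hadm] Hc Hv.
  replace (S n - 1)%nat with n in Hadm by lia.
  replace (c * abar * v) with (abar * (c * v)) by ring.
  destruct (Req_dec (c * v) 0) as [H0|H0].
  - rewrite H0, Rmult_0_r, pow_i, Ropp_0, exp_0, Rminus_diag, pow_i by lia; lra.
  - rewrite Rpow_mult_distr; apply Hadm; nra.
Qed.

Lemma non_admissible_witness (n : nat) (abar s : R) :
  is_alpha_bar (S n) abar -> abar < s ->
  exists y, 0 < y <= 1 /\ y < (1 - exp (- (s * y) ^ n)) ^ n.
Proof.
  intros [[Hab0 _] Hmax] Hs.
  apply NNPP; intros Hno.
  assert (Hadm : admissible (S n) s).
  { split; [lra|]; intros x Hx.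
    replace (S n - 1)%nat with n by lia.
    apply Rnot_lt_le; intros Hlt; apply Hno.
    exists x; split; [exact Hx|rewrite Rpow_mult_distr; exact Hlt]. }
  pose proof (Hmax s Hadm); lra.
Qed.

Definition eventually_small (P : R -> Prop) : Prop :=
  exists eta, 0 < eta /\ forall e, 0 < e <= eta -> P e.

Lemma small_linear (p q : R) : 0 < q -> eventually_small (fun e => e * p <= q).
Proof.
  intros Hq; destruct (Rle_or_lt p 0) as [Hp|Hp].
  - exists 1; split; [lra|intros e He; nra].
  - exists (q / p); split; [apply Rdiv_lt_0_compat; lra|intros e He].
    replace q with (q / p * p) by (field; lra).
    apply Rmult_le_compat_r; lra.
Qed.

Lemma small_and (P Q : R -> Prop) :
  eventually_small P -> eventually_small Q -> eventually_small (fun e => P e /\ Q e).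
Proof.
  intros [a [Ha HP]] [b [Hb HQ]].
  exists (Rmin a b); split; [apply Rmin_pos; assumption|intros e He].
  pose proof (Rmin_l a b); pose proof (Rmin_r a b).
  split; [apply HP|apply HQ]; lra.
Qed.

Lemma lm1_delta_root (n m : nat) (al : R) : (1 <= n)%nat -> (1 <= m)%nat ->
  let eps := Rpower (INR m) (- 1 / INR n) in
  0 < eps /\ INR m * eps ^ n = 1 /\ lm1_delta (S n) (S m) al = al * eps ^ S n.
Proof.
  intros Hn Hm eps.
  assert (Hn0 : 0 < INR n) by (apply lt_0_INR; lia).
  assert (Hm0 : 0 < INR m) by (apply lt_0_INR; lia).
  assert (He : 0 < eps) by apply exp_pos.
  repeat split; [exact He| |].
  - rewrite <- Rpower_pow by exact He; unfold eps; rewrite Rpower_mult.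
    replace (- 1 / INR n * INR n) with (- (1)) by (field; lra).
    rewrite Rpower_Ropp, Rpower_1 by exact Hm0; field; lra.
  - unfold lm1_delta; replace (S m - 1)%nat with m by lia.
    replace (S n - 1)%nat with n by lia.
    rewrite <- Rpower_pow by exact He; unfold eps; rewrite Rpower_mult.
    f_equal; f_equal; field; lra.
Qed.

Lemma lm1_delta_scaling (n : nat) (al : R) (P : R -> Prop) :
  (1 <= n)%nat -> 0 < al -> eventually_small P ->
  exists K, forall m, (K <= m)%nat -> exists e,
    P e /\ 0 < e /\ 0 < lm1_delta (S n) (S m) al <= e /\
    INR m * lm1_delta (S n) (S m) al = e /\ INR m * e ^ n = al ^ n.
Proof.
  intros Hn Hal [eta [Heta HP]].
  destruct (INR_archimed (eta ^ n) (al ^ n) ltac:(apply pow_lt; lra)) as [N HN].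
  exists (S N); intros m Hm.
  destruct (lm1_delta_root n m al Hn ltac:(lia)) as [He [Hpow Hdelta]].
  set (eps := Rpower (INR m) (- 1 / INR n)) in *.
  assert (Hmal : INR m * (al * eps) ^ n = al ^ n)
    by (transitivity (al ^ n * (INR m * eps ^ n)); [rewrite Rpow_mult_distr; ring|
        rewrite Hpow; ring]).
  assert (Hsmall : al * eps <= eta).
  { apply Rnot_lt_le; intros Hlt.
    pose proof (pow_lt_compat n eta (al * eps) Hn ltac:(lra)).
    assert (INR N <= INR m) by (apply le_INR; lia).
    assert (0 <= eta ^ n) by (apply pow_le; lra).
    assert (0 < INR m) by (apply lt_0_INR; lia).
    nra. }
  assert (Heps1 : eps ^ n <= 1).
  { assert (1 <= INR m) by (apply (le_INR 1); lia).
    assert (0 < eps ^ n) by (apply pow_lt; lra).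
    nra. }
  assert (Hae : 0 < al * eps) by (apply Rmult_lt_0_compat; lra).
  assert (0 < eps ^ n) by (apply pow_lt; lra).
  exists (al * eps).
  replace (lm1_delta (S n) (S m) al) with (al * eps * eps ^ n) by (rewrite Hdelta; simpl; ring).
  repeat split; [apply HP; lra|exact Hae|apply Rmult_lt_0_compat; lra| | |exact Hmal].
  - rewrite <- (Rmult_1_r (al * eps)) at 2; apply Rmult_le_compat_l; lra.
  - transitivity (al * eps * (INR m * eps ^ n)); [ring|rewrite Hpow; ring].
Qed.

Lemma Un_cv_0_geometric (u : nat -> R) (C rho : R) :
  0 <= rho < 1 -> (forall i, 0 <= u i <= C * rho ^ i) -> Un_cv u 0.
Proof.
  intros Hrho Hu eps Heps.
  assert (HC : 0 <= C) by (destruct (Hu O) as [H0 H1]; simpl in H1; lra).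
  destruct (pow_lt_1_zero rho ltac:(rewrite Rabs_right; lra) (eps / (C + 1))
              ltac:(apply Rdiv_lt_0_compat; lra)) as [N HN].
  exists N; intros i Hi; unfold Rdist; rewrite Rminus_0_r.
  specialize (HN i Hi); specialize (Hu i).
  rewrite Rabs_right in HN by (apply Rle_ge, pow_le; lra).
  rewrite Rabs_right by lra.
  apply Rle_lt_trans with ((C + 1) * rho ^ i); [pose proof (pow_le rho i); nra|].
  replace eps with ((C + 1) * (eps / (C + 1))) by (field; lra).
  apply Rmult_lt_compat_l; lra.
Qed.

Lemma not_Un_cv_0_bounded_below (u : nat -> R) (c : R) :
  0 < c -> (forall i, c <= u i) -> ~ Un_cv u 0.
Proof.
  intros Hc Hu Hcv.
  destruct (Hcv c Hc) as [N HN].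
  specialize (HN N (le_n N)); specialize (Hu N).
  unfold Rdist in HN; rewrite Rminus_0_r, Rabs_right in HN; lra.
Qed.

(* Part (a): below bar alpha, for large k the normalized iterates contract by
   a fixed factor rho < 1, so x_i <= delta rho^i tends to 0. *)
Lemma lm1_converges (n : nat) (abar al : R) :
  (1 <= n)%nat -> admissible (S n) abar -> 0 < al < abar ->
  exists K, forall m, (K <= m)%nat ->
    Un_cv (lm1_seq (S n) (S m) (lm1_delta (S n) (S m) al)) 0.
Proof.
  intros Hn Hadm [Hal Hlt].
  set (c := (al + abar) / (2 * abar)).
  assert (Hs : c * abar = (al + abar) / 2) by (unfold c; field; lra).
  assert (Hc : 0 < c < 1) by (split; nra).
  set (s := c * abar) in *; set (rho := (1 + c) / 2).
  assert (Hrho : 0 <= rho < 1) by (unfold rho; lra).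
  assert (Hsn : al ^ n < s ^ n) by (apply pow_lt_compat; [exact Hn|lra]).
  assert (Hsmall : eventually_small (fun e =>
    e * 4 <= 1 /\ e * (2 * s ^ n) <= s ^ n - al ^ n /\ e * (INR n * 2 ^ S n * 2) <= 1 - c))
    by (repeat apply small_and; apply small_linear; lra).
  destruct (lm1_delta_scaling n al _ Hn Hal Hsmall) as [K HK].
  exists K; intros m Hm.
  destruct (HK m Hm) as [e [[He4 [Hes Hec]] [He0 [Hd [Hmd Hmal]]]]].
  set (d := lm1_delta (S n) (S m) al) in *.
  assert (He : 0 < e <= 1 / 4) by lra.
  assert (Hstep : forall v, 0 <= v <= 1 -> 0 <= lm1_map n m d v <= rho * v).
  { intros v Hv; split; [apply (map_range n m e d Hn He ltac:(lra) Hmd v Hv)|].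
    eapply Rle_trans.
    - apply (map_upper n m e d al Hn He ltac:(lra) Hmd Hmal s c v); [lra|lra|exact Hv|].
      apply admissible_scaled; [exact Hn|exact Hadm|lra|exact Hv].
    - assert (INR n * 2 ^ S n * e * v <= (1 - c) / 2 * v)
        by (apply Rmult_le_compat_r; lra).
      unfold rho; lra. }
  assert (Hinv : forall i, exists v, 0 <= v <= rho ^ i /\
            lm1_seq (S n) (S m) d i = d * v).
  { apply lm1_seq_invariant; [simpl; lra|intros i v Hv].
    pose proof (pow_unit_interval i rho ltac:(lra)).
    destruct (Hstep v ltac:(lra)); simpl; nra. }
  apply (Un_cv_0_geometric _ d rho); [lra|intros i].
  destruct (Hinv i) as [v [Hv ->]]; nra.
Qed.

(* Part (b): above bar alpha, pick s in (bar alpha, alpha) and a point y where s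
   is not admissible; for large k the normalized iterates never leave [y, 1],
   so x_i >= delta y > 0. *)
Lemma lm1_stalls (n : nat) (abar al : R) :
  (1 <= n)%nat -> is_alpha_bar (S n) abar -> abar < al ->
  exists K, forall m, (K <= m)%nat ->
    ~ Un_cv (lm1_seq (S n) (S m) (lm1_delta (S n) (S m) al)) 0.
Proof.
  intros Hn Habar Hlt.
  assert (Hab0 : 0 <= abar) by (destruct Habar as [[H0 _] _]; exact H0).
  set (s := (al + abar) / 2).
  destruct (non_admissible_witness n abar s Habar ltac:(unfold s; lra)) as [y [Hy Hys]].
  assert (Hsn : s ^ n < al ^ n) by (apply pow_lt_compat; [exact Hn|unfold s; lra]).
  assert (Hsmall : eventually_small (fun e =>
    e * 4 <= 1 /\ e * (INR (S n) * al ^ n) <= al ^ n - s ^ n))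
    by (apply small_and; apply small_linear; lra).
  destruct (lm1_delta_scaling n al _ Hn ltac:(lra) Hsmall) as [K HK].
  exists K; intros m Hm.
  destruct (HK m Hm) as [e [[He4 Hes] [He0 [Hd [Hmd Hmal]]]]].
  set (d := lm1_delta (S n) (S m) al) in *.
  assert (He : 0 < e <= 1 / 4) by lra.
  assert (Hinv : forall i, exists v, y <= v <= 1 /\ lm1_seq (S n) (S m) d i = d * v).
  { apply lm1_seq_invariant; [lra|intros i v Hv]; split.
    - apply Rlt_le, (Rlt_le_trans _ _ _ Hys).
      apply (map_lower n m e d al Hn He ltac:(lra) Hmd Hmal); [unfold s| |split|]; lra.
    - apply (map_range n m e d Hn He ltac:(lra) Hmd v); lra. }
  apply (not_Un_cv_0_bounded_below _ (d * y)); [nra|intros i].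
  destruct (Hinv i) as [v [Hv ->]]; nra.
Qed.

Theorem theorem3 (j : nat) (abar : R) :
  (2 <= j)%nat ->
  is_alpha_bar j abar ->
  (forall alpha : R, 0 < alpha -> alpha < abar ->
     exists K1 : nat, forall k : nat, (K1 <= k)%nat -> (2 <= k)%nat ->
       lm1_delta j k alpha <= 1 ->
       Un_cv (lm1_seq j k (lm1_delta j k alpha)) 0) /\
  (forall alpha : R, abar < alpha ->
     exists K2 : nat, forall k : nat, (K2 <= k)%nat -> (2 <= k)%nat ->
       lm1_delta j k alpha <= 1 ->
       ~ Un_cv (lm1_seq j k (lm1_delta j k alpha)) 0).
Proof.
  intros Hj Habar.
  destruct j as [|n]; [lia|].
  assert (Hn : (1 <= n)%nat) by lia.
  split.
  - intros al Hal Hlt.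
    destruct (lm1_converges n abar al Hn (proj1 Habar) (conj Hal Hlt)) as [K HK].
    exists (S K); intros [|m] Hk _ _; [lia|].
    apply HK; lia.
  - intros al Hlt.
    destruct (lm1_stalls n abar al Hn Habar Hlt) as [K HK].
    exists (S K); intros [|m] Hk _ _; [lia|].
    apply HK; lia.
Qed.
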